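(* Let $0\le a\le b\le1$ and $T=\begin{pmatrix}a&1-b\\1-a&b\end{pmatrix}$. Let $\boldsymbol{\mu}=\frac12\big(1+a+(1-b),\,b-a,\,0,\,0\big)$. Then for every qubit channel $\Phi$ with classical action $T$ one has $\boldsymbol{\mu}\succ\boldsymbol{\lambda}(J_\Phi)$, and there exists a qubit channel $\Phi^{\mathcal C}$ with classical action $T$ such that $\boldsymbol{\lambda}(J_{\Phi^{\mathcal C}})=\boldsymbol{\mu}$.
   Context: Qubit channels are completely positive trace-preserving maps on $2\times2$ complex matrices. Fix an orthonormal basis $\{|1\rangle,|2\rangle\}$, $|\Omega\rangle=\sum_i|ii\rangle$. The Jamio{\l}kowski state of $\Phi$ is $J_\Phi=\frac12(\Phi\otimes\mathcal{I})(|\Omega\rangle\langle\Omega|)$, and the classical action of $\Phi$ is the matrix $T$ with $T_{ij}=\langle i|\Phi(|j\rangle\langle j|)|i\rangle$. $\boldsymbol{\lambda}(X)$ denotes eigenvalues of a Hermitian $X$ in non-increasing order. For real vectors $x,y$ of equal length $n$, $x\succ y$ means $\sum_{i=1}^kx_i^\downarrow\ge\sum_{i=1}^ky_i^\downarrow$ for all $k$, with $x^\downarrow$ the non-increasing rearrangement. *)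

From HB Require Import structures.
From mathcomp Require Import all_boot all_order all_algebra.
From mathcomp Require Import complex mxtens.
Set Implicit Arguments. Unset Strict Implicit. Unset Printing Implicit Defensive.
Import Order.TTheory GRing.Theory Num.Theory.
Local Open Scope ring_scope.

Section QubitDefs.
Variable R : rcfType.
Local Notation C := (R[i]).

Definition adjmx m n (A : 'M[C]_(m, n)) : 'M[C]_(n, m) := (map_mx Num.conj A)^T.

Definition psd n (A : 'M[C]_n) : Prop :=
  adjmx A = A /\ forall v : 'cV[C]_n, 0 <= (adjmx v *m A *m v) 0 0.

(* (Phi (x) I_k)(X) for X acting on C^2 (x) C^k, with index (i,p) encoded by
   mxtens_index (the convention of the tensor product [tensmx] / [*t]). *)
Definition ampl (Phi : 'M[C]_2 -> 'M[C]_2) (k : nat) (X : 'M[C]_(2 * k)) :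
    'M[C]_(2 * k) :=
  \matrix_(r, c)
    Phi (\matrix_(i < 2, j < 2)
           X (mxtens_index (i, (mxtens_unindex r).2))
             (mxtens_index (j, (mxtens_unindex c).2)))
        (mxtens_unindex r).1 (mxtens_unindex c).1.

Definition completely_positive (Phi : 'M[C]_2 -> 'M[C]_2) : Prop :=
  forall (k : nat) (X : 'M[C]_(2 * k)), psd X -> psd (ampl Phi X).

Definition trace_preserving (Phi : 'M[C]_2 -> 'M[C]_2) : Prop :=
  forall X : 'M[C]_2, \tr (Phi X) = \tr X.

Definition qubit_channel (Phi : {linear 'M[C]_2 -> 'M[C]_2}) : Prop :=
  completely_positive Phi /\ trace_preserving Phi.

(* Jamiolkowski state J = 1/2 (Phi (x) I)(|Omega><Omega|)
   = 1/2 sum_{i,j} Phi(|i><j|) (x) |i><j| *)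
Definition jamiolkowski (Phi : 'M[C]_2 -> 'M[C]_2) : 'M[C]_(2 * 2) :=
  2^-1 *: \sum_(i < 2) \sum_(j < 2) (Phi (delta_mx i j) *t delta_mx i j).

Definition classical_action (Phi : 'M[C]_2 -> 'M[C]_2) : 'M[C]_2 :=
  \matrix_(i, j) Phi (delta_mx j j) i i.

Definition Tab (a b : R) : 'M[C]_2 :=
  \matrix_(i < 2, j < 2)
    real_complex R (nth 0 (nth [::] [:: [:: a; 1 - b]; [:: 1 - a; b]] i) j).

Definition spectrum n (X : 'M[C]_n) (s : seq R) : Prop :=
  size s = n /\ char_poly X = \prod_(x <- s) ('X - (real_complex R x)%:P).

Definition majorizes (x y : seq R) : Prop :=
  size x = size y /\
  forall k : nat, (k <= size x)%N ->
    \sum_(i < k) (sort (fun u v : R => v <= u) y)`_i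
      <= \sum_(i < k) (sort (fun u v : R => v <= u) x)`_i.

Definition mu_vec (a b : R) : seq R :=
  [:: (1 + a + (1 - b)) / 2; (b - a) / 2; 0; 0].

End QubitDefs.

From HB Require Import structures.
From mathcomp Require Import all_boot all_order all_algebra.
From mathcomp Require Import complex mxtens.
From mathcomp Require Import ring lra.
Import Order.TTheory GRing.Theory Num.Theory.
Local Open Scope ring_scope.
Set Implicit Arguments. Unset Strict Implicit.

(* Write the Choi matrix [2 J] of [Phi] in 2x2 blocks [[A, B], [B', D]] indexed
   by the output basis.  Trace preservation gives [D = 1 - A] and the classical
   action gives [tr A = a + (1 - b)].  A positive semidefinite 2x2 matrix satisfies
   [A <= tr A], and positivity of the whole block matrix controls the cross terms,
   so every eigenvalue of [J] lies in [[0, mu_1]] with [mu_1 = (1 + a + (1 - b))/2];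
   as the eigenvalues also sum to [1], they are majorized by [(mu_1, 1 - mu_1, 0, 0)].
   Equality is attained by the channel with real Kraus operators
   [[s u1, s u2], [u2, - u1]] and [[0, 0], [t u1, t u2]], where [s^2 = a + 1 - b],
   [t^2 = b - a] and [(s u1, s u2) = (sqrt a, sqrt (1 - b))]: the vectorized Kraus
   operators are orthogonal with squared norms [1 + s^2] and [t^2]. *)

Definition o0 : 'I_2 := @Ordinal 2 0 isT.
Definition o1 : 'I_2 := @Ordinal 2 1 isT.

Lemma ord2P (i : 'I_2) : i = o0 \/ i = o1.
Proof. by case: i => [[|[|//]] Hi]; [left|right]; apply: val_inj. Qed.

Lemma big_ord2 (T : Type) (idx : T) (op : Monoid.com_law idx) (F : 'I_2 -> T) :
  \big[op/idx]_(i < 2) F i = op (F o0) (F o1).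
Proof. by rewrite big_ord_recl big_ord1; congr (op (F _) (F _)); apply: val_inj. Qed.

Lemma big_mxtens_index (T : Type) (idx : T) (op : Monoid.com_law idx) m n
    (F : 'I_(m * n) -> T) :
  \big[op/idx]_(r < m * n) F r =
  \big[op/idx]_(i < m) \big[op/idx]_(j < n) F (mxtens_index (i, j)).
Proof.
rewrite pair_big; apply: reindex; exists (@mxtens_unindex m n) => [[i j] _|k _].
  by rewrite mxtens_indexK.
by rewrite -surjective_pairing mxtens_unindexK.
Qed.

Lemma le0_of_le_pmul (F : numFieldType) (x y : F) :
  0 <= y -> (forall k, 0 < k -> x <= k * y) -> x <= 0.
Proof.
move=> y_ge0 le_xky.
have x_real : x \is Num.real by rewrite (ler_real (le_xky 1 ltr01)) mul1r ger0_real.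
rewrite real_leNgt ?real0 //; apply/negP => x_gt0.
have y1_gt0 : 0 < y + 1 by rewrite ltr_wpDl.
have := le_xky (x / (y + 1)) (divr_gt0 x_gt0 y1_gt0).
rewrite mulrAC -mulrA -{1}[x]mulr1 ler_pM2l // ler_pdivlMr // mul1r.
by rewrite gerDl ler10.
Qed.

(* The hypothesis on [k] is the positivity of a block form at [(x, - k y)];
   the choice [k = r] gives the bound. *)
Lemma cross_term_bound (F : numFieldType) (P B X Nx Ny r : F) :
  0 <= r -> 0 <= Nx -> 0 <= P -> P <= r * Nx -> 0 <= B -> B <= Ny ->
  (forall k, 0 < k -> k * X <= P + k ^+ 2 * B) ->
  P + X + B <= (1 + r) * (Nx + Ny).
Proof.
move=> r_ge0 Nx_ge0 P_ge0 P_le B_ge0 B_le cross.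
have [r0|r_gt0] := eqVneq r 0; last first.
  have {}r_gt0 : 0 < r by rewrite lt_def r_gt0.
  rewrite -(ler_pM2l r_gt0) -subr_ge0.
  have -> : r * ((1 + r) * (Nx + Ny)) - r * (P + X + B) =
      (P + r ^+ 2 * B - r * X) + (1 + r) * (r * Nx - P) + r * (1 + r) * (Ny - B).
    by ring.
  have r1_ge0 : 0 <= 1 + r by rewrite addr_ge0.
  rewrite addr_ge0 ?mulr_ge0 ?subr_ge0 // addr_ge0 ?mulr_ge0 ?subr_ge0 //.
  exact: cross.
move: P_le; rewrite r0 mul0r => P_le0.
have P0 : P = 0 by apply/le_anti/andP.
have X_le0 : X <= 0.
  apply: (le0_of_le_pmul B_ge0) => k k_gt0.
  by rewrite -(ler_pM2l k_gt0) mulrA -expr2 -[_ ^+ 2 * B]add0r -P0 cross.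
rewrite P0 add0r addr0 mul1r; apply: lerD => //.
exact: le_trans X_le0 Nx_ge0.
Qed.

Section Sesquilinear.
Variable R : rcfType.
Local Notation C := R[i].

Lemma adjmxK m n (A : 'M[C]_(m, n)) : adjmx (adjmx A) = A.
Proof. by apply/matrixP => i j; rewrite !mxE conjCK. Qed.

Lemma adjmxM m n p (A : 'M[C]_(m, n)) (B : 'M[C]_(n, p)) :
  adjmx (A *m B) = adjmx B *m adjmx A.
Proof. by rewrite /adjmx map_mxM trmx_mul. Qed.

Lemma adjmxD m n (A B : 'M[C]_(m, n)) : adjmx (A + B) = adjmx A + adjmx B.
Proof. by rewrite /adjmx map_mxD linearD. Qed.

Lemma adjmxZ m n c (A : 'M[C]_(m, n)) : adjmx (c *: A) = c^* *: adjmx A.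
Proof. by apply/matrixP => i j; rewrite !mxE rmorphM. Qed.

Definition sesq n (A : 'M[C]_n) (x y : 'cV[C]_n) : C := (adjmx x *m A *m y) 0 0.

Lemma sesqE n (A : 'M[C]_n) x y :
  sesq A x y = \sum_p \sum_q (x p 0)^* * A p q * y q 0.
Proof.
rewrite /sesq !mxE exchange_big; apply: eq_bigr => q _.
by rewrite !mxE big_distrl; apply: eq_bigr => p _; rewrite !mxE.
Qed.

Lemma sesqZl n (A : 'M[C]_n) k x y : sesq A (k *: x) y = k^* * sesq A x y.
Proof. by rewrite /sesq adjmxZ -!scalemxAl mxE. Qed.

Lemma sesqZr n (A : 'M[C]_n) k x y : sesq A x (k *: y) = k * sesq A x y.
Proof. by rewrite /sesq -scalemxAr mxE. Qed.

Lemma sesq0l n (A : 'M[C]_n) y : sesq A 0 y = 0.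
Proof. by rewrite -(scale0r 0) sesqZl rmorph0 mul0r. Qed.

Lemma sesq0r n (A : 'M[C]_n) x : sesq A x 0 = 0.
Proof. by rewrite -(scale0r 0) sesqZr mul0r. Qed.

Lemma sesqB n (A B : 'M[C]_n) x y : sesq (A - B) x y = sesq A x y - sesq B x y.
Proof. by rewrite /sesq mulmxBr mulmxBl [LHS]mxE [X in _ + X]mxE. Qed.

Lemma sesq1E n (x : 'cV[C]_n) : sesq 1%:M x x = \sum_i (x i 0)^* * x i 0.
Proof. by rewrite /sesq mulmx1 mxE; apply: eq_bigr => i _; rewrite !mxE. Qed.

Lemma sesq1_ge0 n (x : 'cV[C]_n) : 0 <= sesq 1%:M x x.
Proof. by rewrite sesq1E sumr_ge0 // => i _; rewrite mulrC mul_conjC_ge0. Qed.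

Lemma sesq1_gt0 n (x : 'cV[C]_n) : x != 0 -> 0 < sesq 1%:M x x.
Proof.
move=> x_neq0; rewrite lt_def sesq1_ge0 andbT; apply: contra x_neq0.
rewrite sesq1E => /eqP x0; apply/eqP/colP => i; rewrite mxE.
have ge0 j : true -> 0 <= (x j 0)^* * x j 0 by rewrite mulrC mul_conjC_ge0.
have /eqP := psumr_eq0P ge0 x0 (i := i) isT.
by rewrite mulrC mul_conjC_eq0 => /eqP.
Qed.

Lemma psd1 n : psd (1%:M : 'M[C]_n).
Proof.
split; last exact: sesq1_ge0.
by apply/matrixP => i j; rewrite !mxE rmorph_nat eq_sym.
Qed.

Lemma psd_add n (A B : 'M[C]_n) : psd A -> psd B -> psd (A + B).
Proof.
move=> [hA pA] [hB pB]; split; first by rewrite adjmxD hA hB.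
by move=> v; rewrite mulmxDr mulmxDl mxE addr_ge0.
Qed.

Lemma psd_conj m n (A : 'M[C]_(m, n)) (X : 'M[C]_n) :
  psd X -> psd (A *m X *m adjmx A).
Proof.
move=> [hX pX]; split; first by rewrite !adjmxM adjmxK hX mulmxA.
by move=> v; have := pX (adjmx A *m v); rewrite adjmxM adjmxK !mulmxA.
Qed.

Lemma psd_scale n (c : C) (X : 'M[C]_n) : 0 <= c -> psd X -> psd (c *: X).
Proof.
move=> c_ge0 [hX pX]; have /CrealP c_conj := ger0_real c_ge0.
split; first by rewrite adjmxZ c_conj hX.
by move=> v; rewrite -scalemxAr -scalemxAl mxE mulr_ge0.
Qed.

Lemma psd_sum (I : finType) n (A : I -> 'M[C]_n) :
  (forall l, psd (A l)) -> psd (\sum_l A l).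
Proof.
move=> A_psd; apply: (big_ind (@psd R n)) => //; last exact: psd_add.
by rewrite -(scale0r 1%:M); apply: psd_scale (psd1 _).
Qed.

Lemma eigenvalue_bounds n (A : 'M[C]_n) (lo hi z : C) :
  (forall v, lo * sesq 1%:M v v <= sesq A v v <= hi * sesq 1%:M v v) ->
  root (char_poly A) z -> lo <= z <= hi.
Proof.
move=> bounds; rewrite -eigenvalue_root_char => /eigenvalueP [u uA u_neq0].
have v_neq0 : adjmx u != 0.
  by apply: contra u_neq0 => /eqP u0; rewrite -[u]adjmxK u0 /adjmx map_mx0 trmx0.
have := bounds (adjmx u).
have -> : sesq A (adjmx u) (adjmx u) = z * sesq 1%:M (adjmx u) (adjmx u).
  by rewrite /sesq adjmxK uA mulmx1 -scalemxAl mxE.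
by rewrite !ler_pM2r // sesq1_gt0.
Qed.

(* For a 2x2 matrix [\tr A * I - A] is the adjugate of [A], whose form at [x]
   is the form of [A] at the rotated vector [(conj x_1, - conj x_0)]. *)
Lemma sesq_le_trace2 (A : 'M[C]_2) :
  (forall x, 0 <= sesq A x x) -> forall x, sesq A x x <= \tr A * sesq 1%:M x x.
Proof.
move=> A_ge0 x; rewrite -subr_ge0.
pose x' : 'cV[C]_2 := \col_i (if i == o0 then (x o1 0)^* else (- x o0 0)^*).
suff -> : \tr A * sesq 1%:M x x - sesq A x x = sesq A x' x' by [].
by rewrite sesq1E !sesqE /mxtrace !big_ord2 !mxE /= !conjCK rmorphN; ring.
Qed.

Definition block_form n (A B B' D : 'M[C]_n) (x y : 'cV[C]_n) : C :=
  sesq A x x + sesq B x y + sesq B' y x + sesq D y y.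

Lemma block_form_le n (A B B' : 'M[C]_n) (r : C) :
  0 <= r ->
  (forall x y, 0 <= block_form A B B' (1%:M - A) x y) ->
  (forall x, sesq A x x <= r * sesq 1%:M x x) ->
  forall x y, block_form A B B' (1%:M - A) x y <=
              (1 + r) * (sesq 1%:M x x + sesq 1%:M y y).
Proof.
move=> r_ge0 form_ge0 A_le x y.
have diag_ge0 z : 0 <= sesq A z z.
  by have := form_ge0 z 0; rewrite /block_form !(sesq0l, sesq0r) !addr0.
have D_ge0 : 0 <= sesq (1%:M - A) y y.
  by have := form_ge0 0 y; rewrite /block_form !(sesq0l, sesq0r) !add0r.
have D_le : sesq (1%:M - A) y y <= sesq 1%:M y y by rewrite sesqB lerBlDr lerDl.
rewrite /block_form -(addrA (sesq A x x)).
apply: cross_term_bound; rewrite ?sesq1_ge0 ?A_le // => k k_gt0.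
have /CrealP k_conj : - k \is Num.real by rewrite realN gtr0_real.
have := form_ge0 x (- k *: y).
rewrite /block_form !(sesqZl, sesqZr) k_conj -subr_ge0.
by congr (0 <= _); ring.
Qed.

End Sesquilinear.

Section Spectrum.
Variable R : rcfType.
Local Notation C := R[i].
Local Notation rc := (real_complex R).

Lemma spectrum_exists n (A : 'M[C]_n) :
  (forall z, root (char_poly A) z -> z \is Num.real) -> exists s, spectrum A s.
Proof.
move=> real_roots; have [rs def_chi] := closed_field_poly_normal (char_poly A).
rewrite (monicP (char_poly_monic A)) scale1r in def_chi.
exists (map (@complex.Re R) rs); split.
  by have := size_char_poly A; rewrite def_chi size_prod_XsubC size_map => -[].
rewrite def_chi big_map; apply: eq_big_seq => z z_rs.
by rewrite RRe_real // real_roots // def_chi root_prod_XsubC.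
Qed.

Lemma spectrum_root n (A : 'M[C]_n) s x :
  spectrum A s -> x \in s -> root (char_poly A) (rc x).
Proof.
by move=> [_ ->] x_s; rewrite -(big_map rc xpredT (fun a => 'X - a%:P)) root_prod_XsubC map_f.
Qed.

Lemma spectrum_sum n (A : 'M[C]_n) s :
  (0 < n)%N -> spectrum A s -> rc (\sum_(x <- s) x) = \tr A.
Proof.
move=> n_gt0 [size_s chi_s]; apply: oppr_inj.
rewrite -char_poly_trace // chi_s -(big_map rc xpredT (fun a => 'X - a%:P)).
rewrite -(size_map rc s) in size_s *.
by rewrite -size_s coefPn_prod_XsubC ?size_s -?lt0n // rmorph_sum big_map.
Qed.

End Spectrum.

Section Majorization.
Variable R : rcfType.
Local Notation ge := (fun u v : R => v <= u).

Lemma sum_prefix_le (t : seq R) k :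
  (k <= size t)%N -> {in t, forall x, 0 <= x} ->
  \sum_(i < k) t`_i <= \sum_(x <- t) x.
Proof.
move=> k_le t_ge0; rewrite [X in _ <= X](big_nth 0) -(big_mkord xpredT (fun i => t`_i)).
rewrite (big_cat_nat (leq0n k) k_le).
rewrite /= lerDl sumr_ge0 // => i _.
by have [/(mem_nth 0)/t_ge0 //|i_ge] := ltnP i (size t); rewrite nth_default.
Qed.

Lemma path_ge_nseq0 (x : R) n : 0 <= x -> path ge x (nseq n 0).
Proof. by elim: n x => [|n IHn] x x_ge0 //=; rewrite x_ge0 IHn. Qed.

Lemma majorizes_top2 (c : R) (s : seq R) n :
  1 - c <= c -> c <= 1 -> size s = n.+2 ->
  {in s, forall x, 0 <= x <= c} -> \sum_(x <- s) x = 1 ->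
  majorizes (c :: (1 - c) :: nseq n 0) s.
Proof.
move=> c_ge c_le1 size_s s_bnd sum_s; split; first by rewrite size_s /= size_nseq.
have sorted_mu : sorted ge (c :: (1 - c) :: nseq n 0).
  by rewrite /= c_ge path_ge_nseq0 // subr_ge0.
have ge_trans : transitive ge by move=> y x z /= yx zy; apply: le_trans zy yx.
rewrite (sorted_sort ge_trans sorted_mu).
set t := sort _ s; have perm_t : perm_eq t s by rewrite perm_sort.
have t_bnd : {in t, forall x, 0 <= x <= c} by move=> x; rewrite (perm_mem perm_t) => /s_bnd.
have size_t : size t = n.+2 by rewrite size_sort.
case=> [|[|k]] k_le; first by rewrite !big_ord0.
  rewrite !big_ord1 /=.
  by have /andP[] : 0 <= t`_0 <= c by apply/t_bnd/mem_nth; rewrite size_t.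
have k_le_t : (k.+2 <= size t)%N by rewrite size_t; rewrite /= size_nseq in k_le.
have t_ge0 x : x \in t -> 0 <= x by case/t_bnd/andP.
have := sum_prefix_le k_le_t t_ge0; rewrite (perm_big _ perm_t) sum_s !big_ord_recl /=.
have -> : \sum_(i < k) (nseq n 0 : seq R)`_(0 + i) = 0.
  by rewrite big1 // => i _; rewrite nth_nseq if_same.
by rewrite addr0 [c + _]addrC subrK.
Qed.

End Majorization.

Section Choi.
Variable R : rcfType.
Local Notation C := R[i].
Local Notation rc := (real_complex R).
Implicit Types Phi : 'M[C]_2 -> 'M[C]_2.

Lemma jamiolkowskiE Phi i p j q :
  jamiolkowski Phi (mxtens_index (i, p)) (mxtens_index (j, q)) =
  2^-1 * Phi (delta_mx p q) i j.
Proof.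
rewrite /jamiolkowski mxE summxE big_ord2 !summxE !big_ord2 !tensmxE !mxE.
by case: (ord2P p) => ->; case: (ord2P q) => -> /=; rewrite ?mulr0 ?mulr1 ?addr0 ?add0r.
Qed.

Definition omega : 'cV[C]_(2 * 2) :=
  \col_r ((mxtens_unindex r).1 == (mxtens_unindex r).2)%:R.

Lemma jamiolkowski_ampl Phi :
  jamiolkowski Phi = 2^-1 *: ampl Phi (omega *m 1%:M *m adjmx omega).
Proof.
apply/matrixP => r c.
case: (mxtens_indexP r) => i p; case: (mxtens_indexP c) => j q.
rewrite jamiolkowskiE [in RHS]mxE [in RHS]mxE !mxtens_indexK /=; congr (_ * _).
congr (Phi _ i j); apply/matrixP => i' j'.
by rewrite mulmx1 !mxE big_ord1 !mxE !mxtens_indexK /= rmorph_nat -natrM mulnb.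
Qed.

Lemma psd_jamiolkowski Phi : completely_positive Phi -> psd (jamiolkowski Phi).
Proof.
move=> cp; rewrite jamiolkowski_ampl; apply: psd_scale; last exact/cp/psd_conj/psd1.
by rewrite invr_ge0 ler0n.
Qed.

Lemma trace_jamiolkowski Phi : trace_preserving Phi -> \tr (jamiolkowski Phi) = 1.
Proof.
move=> tp; rewrite /mxtrace big_mxtens_index !big_ord2 !jamiolkowskiE.
have := tp (delta_mx o0 o0); have := tp (delta_mx o1 o1).
by rewrite /mxtrace !big_ord2 !mxE /= => tr1 tr0; rewrite -!mulrDr addrACA tr0 tr1; field.
Qed.

Definition choi_block Phi (i j : 'I_2) : 'M[C]_2 :=
  \matrix_(p, q) Phi (delta_mx p q) i j.

Definition tens_slice (i : 'I_2) (v : 'cV[C]_(2 * 2)) : 'cV[C]_2 :=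
  \col_p v (mxtens_index (i, p)) 0.

Lemma sesq_jamiolkowski Phi v :
  sesq (jamiolkowski Phi) v v =
  2^-1 * block_form (choi_block Phi o0 o0) (choi_block Phi o0 o1)
                    (choi_block Phi o1 o0) (choi_block Phi o1 o1)
                    (tens_slice o0 v) (tens_slice o1 v).
Proof.
rewrite /block_form !sesqE big_mxtens_index !big_ord2 !big_mxtens_index !big_ord2.
by rewrite /= !jamiolkowskiE !mxE; ring.
Qed.

Lemma sesq1_tens_slice (v : 'cV[C]_(2 * 2)) :
  sesq 1%:M v v = sesq 1%:M (tens_slice o0 v) (tens_slice o0 v) +
                  sesq 1%:M (tens_slice o1 v) (tens_slice o1 v).
Proof. by rewrite !sesq1E big_mxtens_index !big_ord2 !mxE. Qed.

Lemma choi_block_form_ge0 Phi :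
  psd (jamiolkowski Phi) ->
  forall x y, 0 <= block_form (choi_block Phi o0 o0) (choi_block Phi o0 o1)
                              (choi_block Phi o1 o0) (choi_block Phi o1 o1) x y.
Proof.
move=> [_ J_ge0] x y.
pose v : 'cV[C]_(2 * 2) :=
  \col_r (if (mxtens_unindex r).1 == o0 then x else y) (mxtens_unindex r).2 0.
have v0 : tens_slice o0 v = x by apply/colP => p; rewrite !mxE mxtens_indexK.
have v1 : tens_slice o1 v = y by apply/colP => p; rewrite !mxE mxtens_indexK.
have half_gt0 : 0 < 2^-1 :> C by rewrite invr_gt0 ltr0n.
by have := J_ge0 v; rewrite -/(sesq _ v v) sesq_jamiolkowski v0 v1 pmulr_rge0.
Qed.

Lemma choi_block_tp Phi :
  trace_preserving Phi -> choi_block Phi o1 o1 = 1%:M - choi_block Phi o0 o0.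
Proof.
move=> tp; apply/matrixP => p q; have := tp (delta_mx p q).
rewrite /mxtrace !big_ord2 /= !mxE => tr_pq.
apply/eqP; rewrite eq_sym subr_eq [X in _ == X]addrC tr_pq.
by case: (ord2P p) => ->; case: (ord2P q) => ->; rewrite /= ?addr0 ?add0r.
Qed.

Lemma trace_choi_block Phi a b :
  classical_action Phi = Tab a b -> \tr (choi_block Phi o0 o0) = rc (a + (1 - b)).
Proof.
move=> T_Phi; have T00 := congr1 (fun M : 'M[C]_2 => M o0 o0) T_Phi.
have T01 := congr1 (fun M : 'M[C]_2 => M o0 o1) T_Phi.
rewrite /= !mxE in T00 T01.
by rewrite /mxtrace big_ord2 /= !mxE T00 T01 -rmorphD.
Qed.

End Choi.

Section Upper.
Variable R : rcfType.
Local Notation C := R[i].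
Local Notation rc := (real_complex R).
Variables (a b : R) (Phi : 'M[C]_2 -> 'M[C]_2).
Hypotheses (a_ge0 : 0 <= a) (a_le_b : a <= b) (b_le1 : b <= 1).
Hypotheses (cp : completely_positive Phi) (tp : trace_preserving Phi).
Hypothesis T_Phi : classical_action Phi = Tab a b.

Lemma sesq_jamiolkowski_bounds v :
  0 <= sesq (jamiolkowski Phi) v v <= rc ((1 + a + (1 - b)) / 2) * sesq 1%:M v v.
Proof.
have J_psd := psd_jamiolkowski cp; rewrite (proj2 J_psd v) /=.
have form_ge0 := choi_block_form_ge0 J_psd; rewrite (choi_block_tp tp) in form_ge0.
have A_ge0 x : 0 <= sesq (choi_block Phi o0 o0) x x.
  by have := form_ge0 x 0; rewrite /block_form !(sesq0l, sesq0r) !addr0.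
have tr_ge0 : 0 <= \tr (choi_block Phi o0 o0).
  by rewrite (trace_choi_block T_Phi) ler0c addr_ge0 // subr_ge0.
have := block_form_le tr_ge0 form_ge0 (sesq_le_trace2 A_ge0)
                      (tens_slice o0 v) (tens_slice o1 v).
rewrite (trace_choi_block T_Phi) => le_form.
rewrite sesq_jamiolkowski sesq1_tens_slice (choi_block_tp tp) -addrA [_ / 2]mulrC.
rewrite rmorphM fmorphV rmorph_nat rmorphD rmorph1 -mulrA ler_pM2l //.
by rewrite invr_gt0 ltr0n.
Qed.

Lemma jamiolkowski_majorized :
  exists s, spectrum (jamiolkowski Phi) s /\ majorizes (mu_vec a b) s.
Proof.
set c := (1 + a + (1 - b)) / 2.
have root_bnd z : root (char_poly (jamiolkowski Phi)) z -> 0 <= z <= rc c.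
  by apply: eigenvalue_bounds => v; rewrite mul0r sesq_jamiolkowski_bounds.
have [s spec_s] : exists s, spectrum (jamiolkowski Phi) s.
  by apply: spectrum_exists => z /root_bnd /andP[/ger0_real].
exists s; split => //.
have -> : mu_vec a b = c :: (1 - c) :: nseq 2 0.
  by rewrite /mu_vec /c; congr [:: _, _, _ & _]; field.
have c_ge : 1 - c <= c by move: (a_ge0) (b_le1); rewrite /c; lra.
have c_le1 : c <= 1 by move: (a_le_b); rewrite /c; lra.
apply: (majorizes_top2 c_ge c_le1); first by case: spec_s.
  by move=> x /(spectrum_root spec_s)/root_bnd; rewrite ler0c lecR.
by apply: (@complexI R); rewrite rmorph1 (spectrum_sum _ spec_s) // trace_jamiolkowski.
Qed.

End Upper.

Lemma mulmx3E (T : comNzRingType) m n p q (A : 'M[T]_(m, n)) (X : 'M[T]_(n, p))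
    (B : 'M[T]_(p, q)) i j :
  (A *m X *m B) i j = \sum_k \sum_l A i k * X k l * B l j.
Proof.
rewrite mxE exchange_big; apply: eq_bigr => l _; rewrite mxE big_distrl.
by apply: eq_bigr => k _.
Qed.

Section Kraus.
Variable R : rcfType.
Local Notation C := R[i].

Lemma ampl_sum (I : finType) (f : I -> 'M[C]_2 -> 'M[C]_2) k (X : 'M[C]_(2 * k)) :
  ampl (fun Y => \sum_l f l Y) X = \sum_l ampl (f l) X.
Proof. by apply/matrixP => r c; rewrite !mxE !summxE; apply: eq_bigr => l _; rewrite mxE. Qed.

Lemma ampl_conj (K : 'M[C]_2) k (X : 'M[C]_(2 * k)) :
  ampl (fun Y => K *m Y *m adjmx K) X = (K *t 1%:M) *m X *m adjmx (K *t 1%:M).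
Proof.
apply/matrixP => r c.
case: (mxtens_indexP r) => i p; case: (mxtens_indexP c) => j q.
rewrite mxE !mxtens_indexK /= !mulmx3E [in RHS]big_mxtens_index; apply: eq_bigr => i' _.
rewrite [in RHS](bigD1 p) //= [X in _ + X]big1 ?addr0 => [|p' p'_neq]; last first.
  apply: big1 => c' _.
  by rewrite !mxE !mxtens_indexK /= eq_sym (negbTE p'_neq) mulr0 !mul0r.
rewrite [in RHS]big_mxtens_index; apply: eq_bigr => j' _.
rewrite [in RHS](bigD1 q) //= [X in _ + X]big1 ?addr0 => [|q' q'_neq]; last first.
  by rewrite !mxE !mxtens_indexK /= eq_sym (negbTE q'_neq) mulr0 rmorph0 mulr0.
by rewrite !mxE !mxtens_indexK /= !eqxx !mulr1.
Qed.

Variables (k : nat) (K : 'I_k -> 'M[C]_2).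

Definition kraus (X : 'M[C]_2) : 'M[C]_2 := \sum_l K l *m X *m adjmx (K l).

Lemma kraus_is_linear : linear kraus.
Proof.
move=> c X Y; rewrite /kraus scaler_sumr -big_split; apply: eq_bigr => l _ /=.
by rewrite mulmxDr mulmxDl -scalemxAr -scalemxAl.
Qed.

HB.instance Definition _ := GRing.isLinear.Build C 'M[C]_2 'M[C]_2 _ kraus kraus_is_linear.

Lemma kraus_cp : completely_positive kraus.
Proof.
move=> n X X_psd; rewrite /kraus ampl_sum.
by apply: psd_sum => l; rewrite ampl_conj; apply: psd_conj.
Qed.

Lemma kraus_tp : \sum_l adjmx (K l) *m K l = 1%:M -> trace_preserving kraus.
Proof.
move=> KK1 X; rewrite /kraus raddf_sum /= -[X in _ = \tr X]mul1mx -KK1.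
rewrite mulmx_suml raddf_sum; apply: eq_bigr => l _.
by rewrite mxtrace_mulC mulmxA.
Qed.

Lemma kraus_delta p q i j :
  kraus (delta_mx p q) i j = \sum_l K l i p * (K l j q)^*.
Proof.
rewrite summxE; apply: eq_bigr => l _; rewrite mulmx3E !big_ord2 /= !mxE.
by case: (ord2P p) => ->; case: (ord2P q) => -> /=;
  rewrite ?(mulr0, mul0r, mulr1, addr0, add0r).
Qed.

End Kraus.

Lemma char_poly_sim (F : fieldType) n (V M : 'M[F]_n) :
  V \in unitmx -> char_poly (V *m M *m invmx V) = char_poly M.
Proof.
move=> V_unit; rewrite /char_poly /char_poly_mx.
have -> : 'X%:M - map_mx polyC (V *m M *m invmx V) =
    map_mx polyC V *m ('X%:M - map_mx polyC M) *m map_mx polyC (invmx V).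
  rewrite mulmxBr mulmxBl !map_mxM; congr (_ - _).
  by rewrite mul_mx_scalar -scalemxAl -map_mxM mulmxV // map_mx1 scalemx1.
by rewrite !det_mulmx mulrAC -det_mulmx -map_mxM mulmxV // map_mx1 det1 mul1r.
Qed.

Lemma char_poly_eigenbasis (F : fieldType) n (M V : 'M[F]_n) (d : 'rV[F]_n) :
  V \in unitmx -> M *m V = V *m diag_mx d -> char_poly M = \prod_i ('X - (d 0 i)%:P).
Proof.
move=> V_unit MV; rewrite -[M](mulmxK V_unit) MV char_poly_sim //.
rewrite char_poly_trig ?diag_mx_is_trig //.
by apply: eq_bigr => i _; rewrite mxE eqxx mulr1n.
Qed.

Definition mx2 (T : Type) (x00 x01 x10 x11 : T) : 'M[T]_2 :=
  \matrix_(i, j) if i == o0 then (if j == o0 then x00 else x01)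
                 else (if j == o0 then x10 else x11).

Section RealKraus.
Variable R : rcfType.
Local Notation rc := (real_complex R).

Lemma conj_rc (x : R) : (rc x)^* = rc x.
Proof. by apply/CrealP/complex_realP; exists x. Qed.

Lemma adjmx_rc m n (A : 'M[R]_(m, n)) : adjmx (map_mx rc A) = map_mx rc A^T.
Proof. by apply/matrixP => i j; rewrite !mxE conj_rc. Qed.

Definition choi_vec (A : 'M[R]_2) : 'cV[R]_(2 * 2) :=
  \col_r A (mxtens_unindex r).1 (mxtens_unindex r).2.

Lemma jamiolkowski_kraus_real k (K : 'I_k -> 'M[R]_2) :
  jamiolkowski (kraus (fun l => map_mx rc (K l))) =
  map_mx rc (2^-1 *: \sum_l choi_vec (K l) *m (choi_vec (K l))^T).
Proof.
apply/matrixP => r c; case: (mxtens_indexP r) => i p; case: (mxtens_indexP c) => j q.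
rewrite jamiolkowskiE kraus_delta !mxE rmorphM fmorphV rmorph_nat summxE rmorph_sum.
congr (_ * _); apply: eq_bigr => l _.
by rewrite !mxE big_ord1 !mxE !mxtens_indexK conj_rc rmorphM.
Qed.

Lemma kraus_real_tp k (K : 'I_k -> 'M[R]_2) :
  \sum_l (K l)^T *m K l = 1%:M -> trace_preserving (kraus (fun l => map_mx rc (K l))).
Proof.
move=> KK1; apply: kraus_tp.
under eq_bigr do rewrite adjmx_rc -map_mxM.
by rewrite -raddf_sum /= KK1 map_mx1.
Qed.

Lemma classical_action_kraus_real k (K : 'I_k -> 'M[R]_2) :
  classical_action (kraus (fun l => map_mx rc (K l))) =
  map_mx rc (\matrix_(i, j) \sum_l K l i j ^+ 2).
Proof.
apply/matrixP => i j; rewrite !mxE kraus_delta rmorph_sum.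
by apply: eq_bigr => l _; rewrite !mxE conj_rc -rmorphM.
Qed.

Lemma Tab_mx2 (a b : R) : Tab a b = map_mx rc (mx2 a (1 - b) (1 - a) b).
Proof.
by apply/matrixP => i j; rewrite !mxE; case: (ord2P i) => ->; case: (ord2P j) => ->.
Qed.

End RealKraus.

Section Witness.
Variable R : rcfType.
Local Notation rc := (real_complex R).
Variables (u1 u2 s t : R).

Definition witness_kraus (l : 'I_2) : 'M[R]_2 :=
  if l == o0 then mx2 (s * u1) (s * u2) u2 (- u1) else mx2 0 0 (t * u1) (t * u2).

Definition witness_choi : 'M[R]_(2 * 2) :=
  2^-1 *: \sum_l choi_vec (witness_kraus l) *m (choi_vec (witness_kraus l))^T.

Definition witness_eigvecs : 'M['M[R]_2]_2 :=
  mx2 (witness_kraus o0) (mx2 0 0 u1 u2) (mx2 u2 (- u1) 0 0) (mx2 u1 u2 (- (s * u2)) (s * u1)).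

Definition witness_basis : 'M[R]_(2 * 2) :=
  \matrix_(r, c) choi_vec (witness_eigvecs (mxtens_unindex c).1 (mxtens_unindex c).2) r 0.

Local Notation N := (u1 ^+ 2 + u2 ^+ 2).

Lemma witness_choi_eigen :
  witness_choi *m witness_basis =
  witness_basis *m diag_mx (choi_vec (mx2 ((1 + s ^+ 2) * N / 2) (t ^+ 2 * N / 2) 0 0))^T.
Proof.
apply/matrixP => r c; case: (mxtens_indexP r) => i p; case: (mxtens_indexP c) => j q.
rewrite !mxE !big_mxtens_index !big_ord2 /= !mxE !mxtens_indexK /=.
rewrite !summxE !big_ord2 /= !mxE.
case: (ord2P i) => ->; case: (ord2P p) => ->; case: (ord2P j) => ->; case: (ord2P q) => -> /=.
all: by rewrite !mxE /= !big_ord1 !mxE /=; ring.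
Qed.

Lemma witness_basis_orthogonal :
  witness_basis^T *m witness_basis =
  diag_mx (choi_vec (mx2 ((1 + s ^+ 2) * N) N N ((1 + s ^+ 2) * N)))^T.
Proof.
apply/matrixP => r c; case: (mxtens_indexP r) => i p; case: (mxtens_indexP c) => j q.
rewrite !mxE !big_mxtens_index !big_ord2 /= !mxE !mxtens_indexK /=.
case: (ord2P i) => ->; case: (ord2P p) => ->; case: (ord2P j) => ->; case: (ord2P q) => -> /=.
all: by rewrite !mxE /=; ring.
Qed.

Lemma witness_basis_unit : N = 1 -> witness_basis \in unitmx.
Proof.
move=> N1; have : witness_basis^T *m witness_basis \in unitmx.
  have s_neq0 : 1 + s ^+ 2 != 0 by rewrite paddr_eq0 ?sqr_ge0 // oner_eq0.
  rewrite witness_basis_orthogonal unitmxE det_diag unitfE big_mxtens_index.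
  by rewrite !big_ord2 /= !mxE !mxtens_indexK /= N1 !mulr1 !mulf_neq0 ?oner_eq0.
by rewrite unitmx_mul => /andP[].
Qed.

Lemma char_poly_witness_choi :
  N = 1 -> char_poly witness_choi =
           \prod_(x <- [:: (1 + s ^+ 2) / 2; t ^+ 2 / 2; 0; 0]) ('X - x%:P).
Proof.
move=> N1; rewrite (char_poly_eigenbasis (witness_basis_unit N1) witness_choi_eigen).
rewrite big_mxtens_index !big_ord2 /= !mxE !mxtens_indexK /= N1 !mulr1.
by rewrite !big_cons big_nil mulr1 !mulrA.
Qed.

Definition witness_channel := kraus (fun l => map_mx rc (witness_kraus l)).

Lemma witness_tp : N = 1 -> s ^+ 2 + t ^+ 2 = 1 -> trace_preserving witness_channel.
Proof.
move=> N1 st1; apply: kraus_real_tp.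
have -> : \sum_l (witness_kraus l)^T *m witness_kraus l =
    1%:M + (s ^+ 2 + t ^+ 2 - 1) *: mx2 (u1 ^+ 2) (u1 * u2) (u1 * u2) (u2 ^+ 2)
         + (N - 1) *: 1%:M.
  apply/matrixP => i j; rewrite !mxE !big_ord2 /= !mxE !big_ord2 /= !mxE.
  by case: (ord2P i) => ->; case: (ord2P j) => -> /=; ring.
by rewrite N1 st1 subrr !scale0r !addr0.
Qed.

Lemma witness_classical_action (a b : R) :
  N = 1 -> s ^+ 2 + t ^+ 2 = 1 -> (s * u1) ^+ 2 = a -> (s * u2) ^+ 2 = 1 - b ->
  classical_action witness_channel = Tab a b.
Proof.
move=> N1 st1 <- b_eq; have -> : b = 1 - (s * u2) ^+ 2 by rewrite b_eq subKr.
rewrite classical_action_kraus_real Tab_mx2.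
have -> : \matrix_(i, j) \sum_l witness_kraus l i j ^+ 2 =
    mx2 ((s * u1) ^+ 2) (1 - (1 - (s * u2) ^+ 2)) (1 - (s * u1) ^+ 2) (1 - (s * u2) ^+ 2)
    + (s ^+ 2 + t ^+ 2 - 1) *: mx2 0 0 (u1 ^+ 2) (u2 ^+ 2) + (N - 1) *: mx2 0 0 1 1.
  apply/matrixP => i j; rewrite !mxE !big_ord2 /= !mxE.
  by case: (ord2P i) => ->; case: (ord2P j) => -> /=; ring.
by rewrite N1 st1 subrr !scale0r !addr0.
Qed.

Lemma spectrum_witness_channel :
  N = 1 -> spectrum (jamiolkowski witness_channel) [:: (1 + s ^+ 2) / 2; t ^+ 2 / 2; 0; 0].
Proof.
move=> N1; split => //.
rewrite jamiolkowski_kraus_real -map_char_poly char_poly_witness_choi // rmorph_prod.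
by apply: eq_bigr => x _; exact: map_polyXsubC.
Qed.

End Witness.

Lemma witness_params (R : rcfType) (a b : R) : 0 <= a -> a <= b -> b <= 1 ->
  exists u1 u2 s t : R, [/\ u1 ^+ 2 + u2 ^+ 2 = 1, s ^+ 2 + t ^+ 2 = 1,
     (s * u1) ^+ 2 = a, (s * u2) ^+ 2 = 1 - b & s ^+ 2 = a + (1 - b) /\ t ^+ 2 = b - a].
Proof.
move=> a_ge0 a_le_b b_le1.
have ab_ge0 : 0 <= a + (1 - b) by lra.
have ba_ge0 : 0 <= b - a by lra.
pose s := Num.sqrt (a + (1 - b)); pose t := Num.sqrt (b - a).
have s2 : s ^+ 2 = a + (1 - b) by rewrite sqr_sqrtr.
have t2 : t ^+ 2 = b - a by rewrite sqr_sqrtr.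
have st1 : s ^+ 2 + t ^+ 2 = 1 by rewrite s2 t2; ring.
have [s0|s_neq0] := eqVneq s 0.
  have a0 : a = 0 by move: s2; rewrite s0 expr0n /=; lra.
  have b1 : 1 - b = 0 by move: s2; rewrite s0 expr0n /=; lra.
  exists 0, 1, s, t; split => //.
  - by rewrite expr0n expr1n add0r.
  - by rewrite mulr0 expr0n a0.
  - by rewrite mulr1 s0 expr0n b1.
have b1_ge0 : 0 <= 1 - b by lra.
exists (Num.sqrt a / s), (Num.sqrt (1 - b) / s), s, t; split => //.
- by rewrite !expr_div_n !sqr_sqrtr // -mulrDl -s2 mulfV // expf_neq0.
- by rewrite mulrC divfK // sqr_sqrtr.
- by rewrite mulrC divfK // sqr_sqrtr.
Qed.

Theorem mainTheorem5 (R : rcfType) (a b : R) :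
  0 <= a -> a <= b -> b <= 1 ->
  (forall Phi : {linear 'M[R[i]]_2 -> 'M[R[i]]_2},
      qubit_channel Phi -> classical_action Phi = Tab a b ->
      exists s : seq R, spectrum (jamiolkowski Phi) s /\ majorizes (mu_vec a b) s)
  /\
  (exists PhiC : {linear 'M[R[i]]_2 -> 'M[R[i]]_2},
      qubit_channel PhiC /\ classical_action PhiC = Tab a b /\
      spectrum (jamiolkowski PhiC) (mu_vec a b)).
Proof.
move=> a_ge0 a_le_b b_le1; split=> [Phi [cp tp] T_Phi|].
  exact: jamiolkowski_majorized.
have [u1 [u2 [s [t [u1_norm st1 sa sb [s2 t2]]]]]] := witness_params a_ge0 a_le_b b_le1.
exists (GRing.Linear.clone _ _ _ _ (witness_channel u1 u2 s t) _).
split; [split | split].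
- exact: kraus_cp.
- exact: witness_tp.
- exact: witness_classical_action.
- have -> : mu_vec a b = [:: (1 + s ^+ 2) / 2; t ^+ 2 / 2; 0; 0].
    by rewrite s2 t2 addrA.
  exact: spectrum_witness_channel.
Qed.
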